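(* Let $H_1<G_1$ and $H_2<G_2$ be groups and $K_1,K_2$ groups. If $H_1<G_1$ is relatively sofic over $K_1$ and $H_2<G_2$ is relatively sofic over $K_2$, then $H_1\times H_2<G_1\times G_2$ is relatively sofic over $K_1\times K_2$.
   Context: $H<G$ is relatively sofic over a group $K$ if there exist a sequence of inclusions of groups $(H_i<G_i)_{i\in\mathbb N}$ with all $G_i$ sofic and all $H_i$ amenable, a free ultrafilter $\omega$ on $\mathbb N$, and an embedding $\pi:G\to\prod_\omega(G_i\times K)$ into the algebraic ultraproduct such that $\pi(G)\cap\prod_\omega(H_i\times K)=\pi(H)$. The algebraic ultraproduct is $\prod_\omega L_i=(\prod_i L_i)/N$ with $N=\{(g_i):\{i:g_i=1\}\in\omega\}$. *)

From mathcomp Require Import all_boot fingroup perm.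
From Stdlib Require Import Reals ProofIrrelevance.

Set Implicit Arguments.
Unset Strict Implicit.
Unset Printing Implicit Defensive.

Record Grp := MkGroup {
  carrier :> Type;
  gmul : carrier -> carrier -> carrier;
  gone : carrier;
  ginv : carrier -> carrier;
  gmulA : forall x y z, gmul x (gmul y z) = gmul (gmul x y) z;
  gmul1l : forall x, gmul gone x = x;
  gmul1r : forall x, gmul x gone = x;
  gmulVl : forall x, gmul (ginv x) x = gone;
  gmulVr : forall x, gmul x (ginv x) = gone }.

Arguments gmul {g}.
Arguments gone {g}.
Arguments ginv {g}.

Record Subgroup (G : Grp) := MkSubgroup {
  smem :> G -> Prop;
  smem1 : smem gone;
  smemM : forall x y, smem x -> smem y -> smem (gmul x y);
  smemV : forall x, smem x -> smem (ginv x) }.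

Section SubGroupAsGroup.
Variables (G : Grp) (H : Subgroup G).
Definition sg_car := {x : G | H x}.
Definition sg_mul (a b : sg_car) : sg_car :=
  exist _ (gmul (proj1_sig a) (proj1_sig b)) (smemM (proj2_sig a) (proj2_sig b)).
Definition sg_one : sg_car := exist _ gone (smem1 H).
Definition sg_inv (a : sg_car) : sg_car := exist _ (ginv (proj1_sig a)) (smemV (proj2_sig a)).
Lemma sg_eq (a b : sg_car) : proj1_sig a = proj1_sig b -> a = b.
Proof. destruct a, b; simpl; intros ->; f_equal; apply proof_irrelevance. Qed.
Definition subgroup_group : Grp.
Proof.
refine (@MkGroup sg_car sg_mul sg_one sg_inv _ _ _ _ _); intros;
  apply sg_eq; simpl;
  [apply gmulA | apply gmul1l | apply gmul1r | apply gmulVl | apply gmulVr].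
Defined.
End SubGroupAsGroup.

Definition prod_group (G1 G2 : Grp) : Grp.
Proof.
refine (@MkGroup (G1 * G2)%type
          (fun a b => (gmul a.1 b.1, gmul a.2 b.2))
          (gone, gone)
          (fun a => (ginv a.1, ginv a.2)) _ _ _ _ _);
  intros; simpl;
  [rewrite !gmulA | rewrite !gmul1l | rewrite !gmul1r | rewrite !gmulVl | rewrite !gmulVr];
  destruct x; reflexivity.
Defined.

Definition prod_subgroup (G1 G2 : Grp) (H1 : Subgroup G1) (H2 : Subgroup G2)
  : Subgroup (prod_group G1 G2).
Proof.
refine (@MkSubgroup (prod_group G1 G2) (fun a => H1 a.1 /\ H2 a.2) _ _ _); simpl.
- split; apply smem1.
- intros x y [? ?] [? ?]; split; apply smemM; assumption.
- intros x [? ?]; split; apply smemV; assumption.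
Defined.

Definition amenable (G : Grp) : Prop :=
  exists m : (G -> Prop) -> R,
    (forall A, Rle 0 (m A)) /\
    m (fun _ => True) = 1%R /\
    (forall A B, (forall x, A x -> B x -> False) ->
       m (fun x => A x \/ B x) = Rplus (m A) (m B)) /\
    (forall (g : G) A, m (fun x => A (gmul (ginv g) x)) = m A).

Definition sofic (G : Grp) : Prop :=
  forall (F : seq G) (eps : R), Rlt 0 eps ->
    exists (n : nat) (phi : G -> {perm 'I_n}),
      (forall g h, List.In g F -> List.In h F ->
         Rlt (INR #|[set i : 'I_n | phi (gmul g h) i != phi g (phi h i)]|)
             (Rmult eps (INR n))) /\
      (forall g, List.In g F -> g <> gone ->
         Rlt (INR #|[set i : 'I_n | phi g i == i]|) (Rmult eps (INR n))).

Definition free_ultrafilter (U : (nat -> Prop) -> Prop) : Prop :=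
  U (fun _ => True) /\
  ~ U (fun _ => False) /\
  (forall A B : nat -> Prop, (forall i, A i -> B i) -> U A -> U B) /\
  (forall A B : nat -> Prop, U A -> U B -> U (fun i => A i /\ B i)) /\
  (forall A : nat -> Prop, U A \/ U (fun i => ~ A i)) /\
  (forall n : nat, U (fun i => n <= i)).

(* ---------- relative soficity ----------
   An embedding pi : G -> prod_omega (G_i x K) into the algebraic ultraproduct
   is represented by a lift G -> forall i, G_i x K (choice of representatives):
   - homomorphism: pi(gh) and pi(g)pi(h) agree omega-almost everywhere;
   - injective: pi(g) = 1 in the ultraproduct only for g = 1;
   - pi(G) /\ prod_omega (H_i x K) = pi(H): the class of pi(g) lies in
     prod_omega (H_i x K) iff {i | pi(g)_i in H_i x K} is in omega. *)
Definition rel_sofic (G : Grp) (H : Subgroup G) (K : Grp) : Prop :=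
  exists (Gs : nat -> Grp) (Hs : forall i, Subgroup (Gs i)),
    (forall i, sofic (Gs i)) /\
    (forall i, amenable (subgroup_group (Hs i))) /\
    exists (U : (nat -> Prop) -> Prop)
           (pi : G -> forall i, prod_group (Gs i) K),
      free_ultrafilter U /\
      (forall g h : G, U (fun i => pi (gmul g h) i = gmul (pi g i) (pi h i))) /\
      (forall g : G, U (fun i => pi g i = gone) -> g = gone) /\
      (forall g : G, U (fun i => Hs i (pi g i).1) <-> H g).

(* Everything is done coordinatewise: index pairs (i, j) are coded by Cantor's
   pairing, the approximating pairs are H1_i x H2_j < G1_i x G2_j, the ultrafilter
   is the product U1 (x) U2 ("for U1-most i, for U2-most j"), and
   pi (g1, g2) = (pi1 g1, pi2 g2) with coordinates regrouped.  A product of a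
   U1-large and a U2-large set is large, which transfers the homomorphism
   property; conversely, if most pairs satisfy P1 i /\ P2 j then P1 and P2 are
   both large, which transfers injectivity and the subgroup condition.
   Products of sofic groups are sofic via product permutations of [n1] x [n2].
   Products of amenable groups are amenable via the mean
   m (C) = \int m2 (C_a) dm1 (a): the integral of a [0,1]-valued function against
   a finitely additive mean is the common limit of its Riemann sums
   (1/N) sum_t m1 {f >= t/N}, any two of which differ by at most 1/N, and this
   makes the integral additive. *)

From mathcomp Require Import all_boot fingroup perm zify.
From Stdlib Require Import Reals Lra Lia Classical ClassicalEpsilon.
From Stdlib Require Import FunctionalExtensionality PropExtensionality Cantor.

Set Implicit Arguments.
Unset Strict Implicit.
Unset Printing Implicit Defensive.

Local Open Scope R_scope.

Fixpoint sumR (F : nat -> R) (n : nat) : R :=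
  match n with O => 0 | S k => sumR F k + F k end.

Lemma sumR_ext F G n : (forall t, (t < n)%nat -> F t = G t) -> sumR F n = sumR G n.
Proof.
elim: n => [|n IH] //= FG; rewrite IH ?FG // => t lt_tn; apply: FG; lia.
Qed.

Lemma sumR_le F G n : (forall t, F t <= G t) -> sumR F n <= sumR G n.
Proof. move=> le; elim: n => [|n IH] /=; [lra | have := le n; lra]. Qed.

Lemma sumR_add F G n : sumR (fun t => F t + G t) n = sumR F n + sumR G n.
Proof. elim: n => [|n IH] /=; [lra | rewrite IH; lra]. Qed.

Lemma sumR_const c n : sumR (fun _ => c) n = INR n * c.
Proof. elim: n => [|n IH]; first (simpl; lra). rewrite S_INR /= IH; lra. Qed.

Definition nat_floor (r : R) : nat := Z.to_nat (Int_part r).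

Lemma nat_floor_spec r : 0 <= r -> INR (nat_floor r) <= r < INR (nat_floor r) + 1.
Proof.
move=> r_ge0; have [lo hi] := base_Int_part r.
have Ir_ge0 : (0 <= Int_part r)%Z.
  suff : (-1 < Int_part r)%Z by lia.
  by apply: lt_IZR; lra.
rewrite /nat_floor INR_IZR_INZ Znat.Z2Nat.id //; lra.
Qed.

Lemma leq_nat_floor k r : 0 <= r -> INR k <= r -> (k <= nat_floor r)%nat.
Proof.
move=> r_ge0 kr; have [_ hi] := nat_floor_spec r_ge0.
have : (k < (nat_floor r).+1)%coq_nat by apply: INR_lt; rewrite S_INR; lra.
lia.
Qed.

Lemma nat_floor_leq k r : 0 <= r -> r < INR k + 1 -> (nat_floor r <= k)%nat.
Proof.
move=> r_ge0 rk; have [lo _] := nat_floor_spec r_ge0.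
have : (nat_floor r < k.+1)%coq_nat by apply: INR_lt; rewrite S_INR; lra.
lia.
Qed.

Lemma nat_floor_INR k : nat_floor (INR k) = k.
Proof.
have k_ge0 := pos_INR k.
by apply/eqP; rewrite eqn_leq nat_floor_leq ?leq_nat_floor //; lra.
Qed.

Lemma nat_floorD a b : 0 <= a -> 0 <= b ->
  (nat_floor a + nat_floor b <= nat_floor (a + b) <= nat_floor a + nat_floor b + 1)%nat.
Proof.
move=> a_ge0 b_ge0.
have [a1 a2] := nat_floor_spec a_ge0; have [b1 b2] := nat_floor_spec b_ge0.
apply/andP; split.
- by apply: leq_nat_floor; [lra | rewrite plus_INR; lra].
- by apply: nat_floor_leq; [lra | rewrite !plus_INR /=; lra].
Qed.

Lemma nat_floor_rescale (a b : nat) r : 0 <= r ->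
  (b * nat_floor (INR a * r) <= a * (nat_floor (INR b * r) + 1))%nat.
Proof.
move=> r_ge0; have := pos_INR a; have := pos_INR b => a_ge0 b_ge0.
have [x1 _] := nat_floor_spec (r := INR a * r) ltac:(nra).
have [_ y2] := nat_floor_spec (r := INR b * r) ltac:(nra).
apply/leP; apply: INR_le; rewrite !mult_INR plus_INR /=.
have : INR b * INR (nat_floor (INR a * r)) <= INR b * (INR a * r) by nra.
have : INR a * (INR b * r) <= INR a * (INR (nat_floor (INR b * r)) + 1) by nra.
nra.
Qed.

Lemma Rabs_le_2_over_succ_eq0 d : (forall N, Rabs d <= 2 / INR N.+1) -> d = 0.
Proof.
move=> small; apply: NNPP => d_neq0.
have d_gt0 : 0 < Rabs d / 2 by have := Rabs_pos_lt d d_neq0; lra.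
have [N [N_small N_gt0]] := archimed_cor1 (Rabs d / 2) d_gt0.
have N_pos : 0 < INR N by apply: lt_0_INR; lia.
have := small N; rewrite S_INR => le_d.
have : 2 / (INR N + 1) < 2 / INR N.
  by apply: Rmult_lt_compat_l; [lra | apply: Rinv_lt_contravar; nra].
have : 2 / INR N < Rabs d by rewrite /Rdiv Rmult_comm; lra.
lra.
Qed.

(* The common value [c] of all approximations [u N <= c <= u N + 1/(N+1)]; it
   exists (the supremum of [u]) whenever [u] is Cauchy at that rate, and is an
   arbitrary real otherwise. *)
Definition limit_of (u : nat -> R) : R :=
  epsilon (inhabits 0) (fun c => forall N, u N <= c <= u N + / INR N.+1).

Lemma limit_of_spec u : (forall M N, u M <= u N + / INR N.+1) ->
  forall N, u N <= limit_of u <= u N + / INR N.+1.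
Proof.
move=> cauchy; apply: (epsilon_spec (inhabits 0) (fun c => forall N, _ <= c <= _)).
have bounded : bound (fun r => exists N, r = u N).
  by exists (u 0%nat + 1) => _ [M ->]; have := cauchy M 0%nat; rewrite /= Rinv_1.
have [c [ub lub]] := completeness _ bounded (ex_intro _ (u 0%nat) (ex_intro _ 0%nat erefl)).
exists c => N; split; first by apply: ub; exists N.
by apply: lub => _ [M ->]; apply: cauchy.
Qed.

Definition unit_valued (X : Type) (f : X -> R) := forall x, 0 <= f x <= 1.

Record is_mean (X : Type) (m : (X -> Prop) -> R) : Prop := {
  mean_ge0 : forall A, 0 <= m A;
  mean_setT : m (fun _ => True) = 1;
  mean_add : forall A B, (forall x, A x -> B x -> False) ->
    m (fun x => A x \/ B x) = m A + m B }.

Lemma amenableP (G : Grp) : amenable G <->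
  exists m, is_mean m /\ forall (g : G) A, m (fun x => A (gmul (ginv g) x)) = m A.
Proof.
split=> [[m [m_ge0 [m_setT [m_add m_inv]]]] | [m [[m_ge0 m_setT m_add] m_inv]]].
- by exists m; split=> //; split.
- by exists m.
Qed.

Section Mean.
Variables (X : Type) (m : (X -> Prop) -> R).

Lemma mean_ext A B : (forall x, A x <-> B x) -> m A = m B.
Proof.
move=> AB; congr m; apply: functional_extensionality => x.
exact: propositional_extensionality.
Qed.

Hypothesis mm : is_mean m.

Lemma mean_set0 : m (fun _ => False) = 0.
Proof.
have := mean_add mm (A := fun _ => False) (B := fun _ => False) (fun _ a _ => a).
by rewrite (@mean_ext _ (fun _ => False)) => [|x]; [lra | tauto].
Qed.

Lemma mean_le A B : (forall x, A x -> B x) -> m A <= m B.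
Proof.
move=> AB.
have := mean_add mm (A := A) (B := fun x => B x /\ ~ A x) (fun x a b => proj2 b a).
rewrite (@mean_ext _ B) => [|x].
  by have := mean_ge0 mm (fun x => B x /\ ~ A x); lra.
by split=> [[/AB | []] | Bx] //; case: (classic (A x)) => Ax; [left | right].
Qed.

Lemma mean_le1 A : m A <= 1.
Proof. by rewrite -(mean_setT mm); apply: mean_le. Qed.

(* Layer-cake formula for the integral of [h : X -> nat] when [h <= n]. *)
Definition nat_integral n (h : X -> nat) : R :=
  sumR (fun t => m (fun x => (t < h x)%nat)) n.

Lemma nat_integral_ge0 n h : 0 <= nat_integral n h.
Proof.
rewrite -(Rmult_0_r (INR n)) -sumR_const; apply: sumR_le => t; exact: mean_ge0.
Qed.

Lemma nat_integral0 h : nat_integral 0 h = 0.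
Proof. by []. Qed.

Lemma nat_integralS n h :
  nat_integral n.+1 h = nat_integral n h + m (fun x => (n < h x)%nat).
Proof. by []. Qed.

Lemma nat_integral_widen n n' h : (forall x, (h x <= n)%nat) -> (n <= n')%nat ->
  nat_integral n' h = nat_integral n h.
Proof.
move=> h_le /subnKC <-; elim: (n' - n)%nat => [|k IH]; first by rewrite addn0.
rewrite addnS nat_integralS IH.
rewrite (@mean_ext _ (fun _ => False)) ?mean_set0 => [|x]; first lra.
by split=> // lt_h; have := h_le x; lia.
Qed.

Lemma nat_integral_le n h h' : (forall x, (h x <= h' x)%nat) ->
  nat_integral n h <= nat_integral n h'.
Proof. by move=> hh'; apply: sumR_le => t; apply: mean_le => x; have := hh' x; lia. Qed.

Lemma nat_integral_cst n : nat_integral n (fun _ => n) = INR n.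
Proof.
rewrite /nat_integral (@sumR_ext _ (fun _ => 1)) ?sumR_const ?Rmult_1_r // => t lt_tn.
by rewrite -(mean_setT mm); apply: mean_ext.
Qed.

Lemma sumR_mean_level (h : X -> nat) (P : X -> Prop) k :
  sumR (fun t => m (fun x => h x = t /\ P x)) k = m (fun x => (h x < k)%nat /\ P x).
Proof.
elim: k => [|k IH] /=.
  by rewrite (@mean_ext _ (fun _ => False)) ?mean_set0 // => x; split=> // [[]].
rewrite IH -(mean_add mm) => [|x [lt_hk _] [eq_hk _]]; last by lia.
apply: mean_ext => x; split=> [[[lt_hk Px] | [<- Px]] | [lt_hk1 Px]]; try by split=> //; lia.
by case: (ltngtP (h x) k) => cmp; [left | lia | right].
Qed.

Lemma nat_integral_add1 n h (b : X -> bool) : (forall x, (h x <= n)%nat) ->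
  nat_integral n.+1 (fun x => h x + b x)%nat = nat_integral n h + m (fun x => b x).
Proof.
move=> h_le.
have split_level t : m (fun x => (t < h x + b x)%nat) =
    m (fun x => (t < h x)%nat) + m (fun x => h x = t /\ b x).
  rewrite -(mean_add mm) => [|x lt_th [eq_ht _]]; last by lia.
  apply: mean_ext => x; split=> [|[|[<- ->]]]; last by lia.
    case: (b x) => /= lt_t; last by left; lia.
    by case: (ltngtP t (h x)) => cmp; [left | lia | right].
  by lia.
rewrite [LHS]/nat_integral (sumR_ext (fun t _ => split_level t)) sumR_add sumR_mean_level.
rewrite -/(nat_integral n.+1 h) nat_integralS.
rewrite (@mean_ext (fun x => (n < h x)%nat) (fun _ => False)) ?mean_set0 => [|x]; last first.
  by split=> // lt_nh; have := h_le x; lia.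
rewrite (@mean_ext (fun x => (h x < n.+1)%nat /\ b x) (fun x => b x)) => [|x]; first lra.
by split=> [[] | bx] //; split=> //; have := h_le x; lia.
Qed.

Lemma nat_integral_ext n h h' : (forall x, h x = h' x) ->
  nat_integral n h = nat_integral n h'.
Proof. by move=> /functional_extensionality ->. Qed.

Lemma nat_integral_add n1 n2 h1 h2 :
  (forall x, (h1 x <= n1)%nat) -> (forall x, (h2 x <= n2)%nat) ->
  nat_integral (n1 + n2) (fun x => h1 x + h2 x)%nat =
  nat_integral n1 h1 + nat_integral n2 h2.
Proof.
elim: n2 h2 => [|n2 IH] h2 h1_le h2_le.
  rewrite addn0 (@nat_integral_ext _ _ h1) => [|x].
    by rewrite nat_integral0 Rplus_0_r.
  by have := h2_le x; lia.
pose b x := (0 < h2 x)%nat.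
have h2E x : h2 x = (h2 x - 1 + b x)%nat by rewrite /b; case: (h2 x) => /= [|k]; lia.
rewrite (@nat_integral_ext _ _ (fun x => h1 x + (h2 x - 1) + b x)%nat) => [|x]; last first.
  by rewrite {1}h2E addnA.
rewrite (nat_integral_ext _ h2E) addnS !nat_integral_add1 => [|x|x].
- by rewrite IH // => [|x]; [lra | have := h2_le x; lia].
- by have := h2_le x; lia.
- by have := h1_le x; have := h2_le x; lia.
Qed.

Lemma nat_integral_scale k n h : (forall x, (h x <= n)%nat) ->
  nat_integral (k * n) (fun x => k * h x)%nat = INR k * nat_integral n h.
Proof.
move=> h_le; elim: k => [|k IH]; first by rewrite mul0n nat_integral0 Rmult_0_l.
rewrite mulSn (@nat_integral_ext _ _ (fun x => h x + k * h x)%nat) => [|x]; last first.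
  by rewrite mulSn.
rewrite nat_integral_add // ?IH ?S_INR => [|x]; first lra.
by rewrite leq_mul2l h_le orbT.
Qed.

Definition scaled_floor N (f : X -> R) x := nat_floor (INR N.+1 * f x).

Lemma scaled_floor_le N f x : unit_valued f -> (scaled_floor N f x <= N.+1)%nat.
Proof.
move=> f01; have := f01 x; have := pos_INR N.+1 => N_ge0 fx.
by apply: nat_floor_leq; nra.
Qed.

Definition riemann_sum N f := nat_integral N.+1 (scaled_floor N f) / INR N.+1.

Lemma riemann_sum_ge0 N f : 0 <= riemann_sum N f.
Proof.
apply: Rmult_le_pos; first exact: nat_integral_ge0.
by apply: Rlt_le; apply: Rinv_0_lt_compat; apply: lt_0_INR; lia.
Qed.

Lemma riemann_sum_cmp M N f : unit_valued f ->
  riemann_sum M f <= riemann_sum N f + / INR N.+1.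
Proof.
move=> f01.
have M_gt0 : 0 < INR M.+1 by apply: lt_0_INR; lia.
have N_gt0 : 0 < INR N.+1 by apply: lt_0_INR; lia.
have sfN_le x := scaled_floor_le N x f01.
have sfM_le x := scaled_floor_le M x f01.
have rescale : INR N.+1 * nat_integral M.+1 (scaled_floor M f) <=
               INR M.+1 * (nat_integral N.+1 (scaled_floor N f) + 1).
  rewrite -nat_integral_scale //.
  rewrite -(@nat_integral_widen (N.+1 * M.+1) (M.+1 * (N.+1 + 1))) => [|x|]; first last.
  - by rewrite mulnC leq_mul2l; lia.
  - by rewrite leq_mul2l sfM_le orbT.
  have floor_rescale x := nat_floor_rescale M.+1 N.+1 (proj1 (f01 x)).
  apply: Rle_trans (nat_integral_le _ floor_rescale) _.
  rewrite nat_integral_scale => [|x]; last by have := sfN_le x; rewrite /scaled_floor; lia.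
  by rewrite nat_integral_add // nat_integral_cst INR_1; right.
rewrite /riemann_sum; apply: (Rmult_le_reg_r (INR M.+1 * INR N.+1)); first nra.
have -> : nat_integral M.+1 (scaled_floor M f) / INR M.+1 * (INR M.+1 * INR N.+1) =
          INR N.+1 * nat_integral M.+1 (scaled_floor M f) by field; lra.
have -> : (nat_integral N.+1 (scaled_floor N f) / INR N.+1 + / INR N.+1) *
          (INR M.+1 * INR N.+1) =
          INR M.+1 * (nat_integral N.+1 (scaled_floor N f) + 1) by field; lra.
exact: rescale.
Qed.

Lemma scaled_floorD N f g x : unit_valued f -> unit_valued g ->
  (scaled_floor N f x + scaled_floor N g x <= scaled_floor N (fun y => (f y + g y)%R) x <=
   scaled_floor N f x + scaled_floor N g x + 1)%nat.
Proof.
move=> f01 g01; have := f01 x; have := g01 x; have := pos_INR N.+1 => N_ge0 gx fx.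
by rewrite /scaled_floor Rmult_plus_distr_l; apply: nat_floorD; nra.
Qed.

Lemma riemann_sum_add N f g :
  unit_valued f -> unit_valued g -> unit_valued (fun x => f x + g x) ->
  riemann_sum N f + riemann_sum N g <= riemann_sum N (fun x => f x + g x) <=
  riemann_sum N f + riemann_sum N g + / INR N.+1.
Proof.
move=> f01 g01 fg01; set fg := fun x => f x + g x.
have sfD x := scaled_floorD N x f01 g01.
have sf_le h x : unit_valued h -> (scaled_floor N h x <= N.+1)%nat by move/scaled_floor_le.
have lo : nat_integral N.+1 (scaled_floor N f) + nat_integral N.+1 (scaled_floor N g) <=
          nat_integral N.+1 (scaled_floor N fg).
  rewrite -nat_integral_add => [|x|x]; try exact: sf_le.
  rewrite -(@nat_integral_widen N.+1 (N.+1 + N.+1) (scaled_floor N fg)) => [|x|].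
  - by apply: nat_integral_le => x; case/andP: (sfD x).
  - exact: sf_le.
  - by rewrite leq_addr.
have hi : nat_integral N.+1 (scaled_floor N fg) <=
          nat_integral N.+1 (scaled_floor N f) + nat_integral N.+1 (scaled_floor N g) + 1.
  rewrite -(@nat_integral_widen N.+1 (N.+1 + (N.+1 + 1)) (scaled_floor N fg)) => [|x|];
    first last.
  - by rewrite leq_addr.
  - exact: sf_le.
  have sfD_le x : (scaled_floor N fg x <= scaled_floor N f x + (scaled_floor N g x + 1))%nat.
    by case/andP: (sfD x); rewrite addnA.
  apply: Rle_trans (nat_integral_le _ sfD_le) _.
  rewrite nat_integral_add => [|x|x].
  - by rewrite nat_integral_add // ?nat_integral_cst ?INR_1 => [|x]; [lra | exact: sf_le].
  - exact: sf_le.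
  - by have := sf_le g x g01; lia.
have N_inv_gt0 : 0 < / INR N.+1 by apply: Rinv_0_lt_compat; apply: lt_0_INR; lia.
rewrite /riemann_sum /Rdiv -Rmult_plus_distr_r; split; first by apply: Rmult_le_compat_r; lra.
rewrite -{3}(Rmult_1_l (/ INR N.+1)) -Rmult_plus_distr_r.
by apply: Rmult_le_compat_r; lra.
Qed.

Lemma riemann_sum_cst1 N : riemann_sum N (fun _ => 1) = 1.
Proof.
rewrite /riemann_sum (@nat_integral_ext _ _ (fun _ => N.+1)) => [|x].
  by rewrite nat_integral_cst; field; apply: not_0_INR.
by rewrite /scaled_floor Rmult_1_r nat_floor_INR.
Qed.

Definition integral f := limit_of (fun N => riemann_sum N f).

Lemma integral_spec f : unit_valued f ->
  forall N, riemann_sum N f <= integral f <= riemann_sum N f + / INR N.+1.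
Proof. by move=> f01; apply: limit_of_spec => M N; apply: riemann_sum_cmp. Qed.

Lemma integral_ge0 f : unit_valued f -> 0 <= integral f.
Proof.
by move=> f01; have [le_int _] := integral_spec f01 0; have := riemann_sum_ge0 0 f; lra.
Qed.

Lemma integral_add f g :
  unit_valued f -> unit_valued g -> unit_valued (fun x => f x + g x) ->
  integral (fun x => f x + g x) = integral f + integral g.
Proof.
move=> f01 g01 fg01; apply: Rminus_diag_uniq; apply: Rabs_le_2_over_succ_eq0 => N.
have := integral_spec f01 N; have := integral_spec g01 N; have := integral_spec fg01 N.
have := riemann_sum_add N f01 g01 fg01.
by rewrite /Rdiv => *; apply: Rabs_le; lra.
Qed.

Lemma integral_cst1 : integral (fun _ => 1) = 1.
Proof.
apply: Rminus_diag_uniq; apply: Rabs_le_2_over_succ_eq0 => N.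
have f01 : unit_valued (fun _ : X => 1) by move=> _; lra.
have := integral_spec f01 N; rewrite riemann_sum_cst1.
have : 0 < / INR N.+1 by apply: Rinv_0_lt_compat; apply: lt_0_INR; lia.
by rewrite /Rdiv => *; apply: Rabs_le; lra.
Qed.

Lemma integral_comp (tau : X -> X) f : (forall A, m (fun x => A (tau x)) = m A) ->
  integral (fun x => f (tau x)) = integral f.
Proof.
move=> m_tau; congr limit_of; apply: functional_extensionality => N.
congr (_ / _); apply: sumR_ext => t _.
exact: (m_tau (fun y => (t < scaled_floor N f y)%nat)).
Qed.

End Mean.

Section ProdMean.
Variables (X Y : Type) (m1 : (X -> Prop) -> R) (m2 : (Y -> Prop) -> R).
Hypotheses (mm1 : is_mean m1) (mm2 : is_mean m2).

Definition prod_mean (C : X * Y -> Prop) : R :=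
  integral m1 (fun a => m2 (fun b => C (a, b))).

Lemma unit_valued_mean (A : X -> Y -> Prop) : unit_valued (fun a => m2 (A a)).
Proof. by move=> a; split; [apply: mean_ge0 | apply: mean_le1]. Qed.

Lemma is_mean_prod : is_mean prod_mean.
Proof.
split=> [C | | C D CD].
- exact: integral_ge0 (unit_valued_mean _).
- rewrite /prod_mean -(integral_cst1 mm1); congr integral.
  by apply: functional_extensionality => a; apply: mean_setT.
- have sliceD a :
      m2 (fun b => C (a, b) \/ D (a, b)) = m2 (fun b => C (a, b)) + m2 (fun b => D (a, b)).
    by apply: mean_add => // b; apply: CD.
  rewrite /prod_mean (functional_extensionality _ _ sliceD) integral_add //;
    try exact: unit_valued_mean.
  by move=> a; rewrite -sliceD; apply: unit_valued_mean (fun a b => C (a, b) \/ D (a, b)) a.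
Qed.

End ProdMean.

Lemma amenable_prod_group (A B : Grp) :
  amenable A -> amenable B -> amenable (prod_group A B).
Proof.
move=> /amenableP [m1 [mm1 inv1]] /amenableP [m2 [mm2 inv2]]; apply/amenableP.
exists (prod_mean m1 m2); split; first exact: is_mean_prod.
move=> [g1 g2] C; rewrite /prod_mean /=.
transitivity (integral m1 (fun a => m2 (fun b => C (gmul (ginv g1) a, b)))).
  congr integral; apply: functional_extensionality => a.
  exact: (inv2 g2 (fun b => C (gmul (ginv g1) a, b))).
exact: (integral_comp (fun a => m2 (fun b => C (a, b))) (inv1 g1)).
Qed.

Lemma ginv_unique (G : Grp) (x y : G) : gmul x y = gone -> y = ginv x.
Proof.
move=> xy1; transitivity (gmul (ginv x) (gmul x y)); first by rewrite gmulA gmulVl gmul1l.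
by rewrite xy1 gmul1r.
Qed.

Section Morphism.
Variables (G G' : Grp) (f : G -> G').
Hypothesis f_mul : forall x y, f (gmul x y) = gmul (f x) (f y).

Lemma morph1 : f gone = gone.
Proof.
have idem : gmul (f gone) (f gone) = f gone by rewrite -f_mul gmul1l.
transitivity (gmul (ginv (f gone)) (gmul (f gone) (f gone))).
  by rewrite gmulA gmulVl gmul1l.
by rewrite idem gmulVl.
Qed.

Lemma morphV x : f (ginv x) = ginv (f x).
Proof. by apply: ginv_unique; rewrite -f_mul gmulVr morph1. Qed.

Lemma amenable_surj_morph : (forall y, exists x, f x = y) -> amenable G -> amenable G'.
Proof.
move=> f_onto /amenableP [m [[m_ge0 m_setT m_add] m_inv]]; apply/amenableP.
exists (fun A => m (fun x => A (f x))); split.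
  by split=> // A B AB; apply: m_add => x; apply: AB.
move=> g' A; have [g <-] := f_onto g'; rewrite -(m_inv g (fun x => A (f x))).
by congr m; apply: functional_extensionality => x; rewrite f_mul morphV.
Qed.

End Morphism.

Definition subgroup_pair (G1 G2 : Grp) (H1 : Subgroup G1) (H2 : Subgroup G2)
    (a : prod_group (subgroup_group H1) (subgroup_group H2)) :
    subgroup_group (prod_subgroup H1 H2) :=
  exist _ (proj1_sig a.1, proj1_sig a.2) (conj (proj2_sig a.1) (proj2_sig a.2)).

Lemma amenable_prod_subgroup (G1 G2 : Grp) (H1 : Subgroup G1) (H2 : Subgroup G2) :
  amenable (subgroup_group H1) -> amenable (subgroup_group H2) ->
  amenable (subgroup_group (prod_subgroup H1 H2)).
Proof.
move=> am1 am2; apply: (@amenable_surj_morph _ _ (@subgroup_pair _ _ H1 H2)).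
- by move=> a b; apply: sg_eq.
- by move=> [[x1 x2] [h1 h2]]; exists (exist _ x1 h1, exist _ x2 h2); apply: sg_eq.
- exact: amenable_prod_group.
Qed.

Section FinitePermutations.
Local Open Scope nat_scope.

Lemma card_enum_val (T : finType) (P : pred T) :
  #|[set i : 'I_#|T| | P (enum_val i)]| = #|[set t | P t]|.
Proof.
rewrite -(card_imset _ enum_val_inj); apply: eq_card => t; rewrite [RHS]inE.
apply/imsetP/idP => [[i] | Pt]; first by rewrite inE => Pi ->.
by exists (enum_rank t); rewrite ?inE enum_rankK.
Qed.

Lemma enum_conj_inj (T : finType) (s : {perm T}) :
  injective (fun i : 'I_#|T| => enum_rank (s (enum_val i))).
Proof. by move=> i j /enum_rank_inj /perm_inj /enum_val_inj. Qed.

Definition enum_perm (T : finType) (s : {perm T}) : {perm 'I_#|T|} :=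
  perm (@enum_conj_inj T s).

Lemma card_enum_perm_neq (T : finType) (s r q : {perm T}) :
  #|[set i | enum_perm s i != enum_perm r (enum_perm q i)]| = #|[set t | s t != r (q t)]|.
Proof.
rewrite -[RHS]card_enum_val; apply: eq_card => i; rewrite !inE !permE enum_rankK.
by rewrite (inj_eq enum_rank_inj).
Qed.

Lemma card_enum_perm_fixed (T : finType) (s : {perm T}) :
  #|[set i | enum_perm s i == i]| = #|[set t | s t == t]|.
Proof.
rewrite -[RHS]card_enum_val; apply: eq_card => i; rewrite !inE permE.
by rewrite -{2}(enum_valK i) (inj_eq enum_rank_inj).
Qed.

Lemma prod_perm_inj (T1 T2 : finType) (s1 : {perm T1}) (s2 : {perm T2}) :
  injective (fun t : T1 * T2 => (s1 t.1, s2 t.2)).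
Proof. by move=> [a b] [c d] [/perm_inj -> /perm_inj ->]. Qed.

Definition prod_perm (T1 T2 : finType) (s1 : {perm T1}) (s2 : {perm T2}) :
  {perm T1 * T2} := perm (@prod_perm_inj T1 T2 s1 s2).

Lemma card_prod_perm_neq (T1 T2 : finType) (s1 r1 q1 : {perm T1}) (s2 r2 q2 : {perm T2}) :
  #|[set t | prod_perm s1 s2 t != prod_perm r1 r2 (prod_perm q1 q2 t)]| <=
  #|[set x | s1 x != r1 (q1 x)]| * #|T2| + #|T1| * #|[set y | s2 y != r2 (q2 y)]|.
Proof.
rewrite -[#|T2|]cardsT -[#|T1|]cardsT -!cardsX; apply: leq_trans (leq_card_setU _ _).
apply: subset_leq_card; apply/subsetP => -[x y].
by rewrite !inE !permE xpair_eqE negb_and andbT.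
Qed.

Lemma card_prod_perm_fixed (T1 T2 : finType) (s1 : {perm T1}) (s2 : {perm T2}) :
  #|[set t | prod_perm s1 s2 t == t]| = #|[set x | s1 x == x]| * #|[set y | s2 y == y]|.
Proof. by rewrite -cardsX; apply: eq_card => -[x y]; rewrite !inE permE xpair_eqE. Qed.

End FinitePermutations.

Lemma Rlt_mismatch_bound (c c1 c2 n1 n2 eps : R) : 0 < eps -> 0 <= c1 -> 0 <= c2 ->
  c <= c1 * n2 + n1 * c2 -> c1 < eps / 2 * n1 -> c2 < eps / 2 * n2 -> c < eps * (n1 * n2).
Proof.
move=> eps_gt0 c1_ge0 c2_ge0 c_le c1_lt c2_lt.
have n1_gt0 : 0 < n1 by nra.
have n2_gt0 : 0 < n2 by nra.
nra.
Qed.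

Lemma Rlt_fixed_bound (c1 c2 n1 n2 eps : R) : 0 < eps -> 0 <= c1 <= n1 -> 0 <= c2 <= n2 ->
  0 < n1 -> 0 < n2 -> c1 < eps / 2 * n1 \/ c2 < eps / 2 * n2 -> c1 * c2 < eps * (n1 * n2).
Proof. by move=> eps_gt0 c1_bd c2_bd n1_gt0 n2_gt0 [c1_lt | c2_lt]; nra. Qed.

Lemma sofic_prod (G1 G2 : Grp) : sofic G1 -> sofic G2 -> sofic (prod_group G1 G2).
Proof.
move=> sofic1 sofic2 F eps eps_gt0.
have [n1 [phi1 [mul1 fix1]]] := sofic1 (List.map fst F) (eps / 2) ltac:(lra).
have [n2 [phi2 [mul2 fix2]]] := sofic2 (List.map snd F) (eps / 2) ltac:(lra).
have F1 g : List.In g F -> List.In g.1 (List.map fst F) by exact: List.in_map.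
have F2 g : List.In g F -> List.In g.2 (List.map snd F) by exact: List.in_map.
have card_ge0 (T : finType) (A : {set T}) : 0 <= INR #|A| by exact: pos_INR.
have n1_gt0 g : List.In g F -> 0 < INR n1.
  by move=> /F1 Fg; have := Rle_lt_trans _ _ _ (card_ge0 _ _) (mul1 _ _ Fg Fg); nra.
have n2_gt0 g : List.In g F -> 0 < INR n2.
  by move=> /F2 Fg; have := Rle_lt_trans _ _ _ (card_ge0 _ _) (mul2 _ _ Fg Fg); nra.
have card_n : INR #|{: 'I_n1 * 'I_n2}| = INR n1 * INR n2.
  by rewrite card_prod !card_ord mult_INR.
exists #|{: 'I_n1 * 'I_n2}|, (fun g => enum_perm (prod_perm (phi1 g.1) (phi2 g.2))).
rewrite card_n.
split=> [g h Fg Fh | g Fg g_neq1].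
- rewrite card_enum_perm_neq.
  have := card_prod_perm_neq (phi1 (gmul g h).1) (phi1 g.1) (phi1 h.1)
                             (phi2 (gmul g h).2) (phi2 g.2) (phi2 h.2).
  rewrite !card_ord => /leP/le_INR; rewrite plus_INR !mult_INR => bound.
  apply: (Rlt_mismatch_bound eps_gt0 (card_ge0 _ _) (card_ge0 _ _) bound).
  + exact: mul1 (F1 _ Fg) (F1 _ Fh).
  + exact: mul2 (F2 _ Fg) (F2 _ Fh).
- rewrite card_enum_perm_fixed card_prod_perm_fixed mult_INR.
  have card_le n (A : {set 'I_n}) : 0 <= INR #|A| <= INR n.
    split; first exact: pos_INR.
    by apply/le_INR/leP; exact: leq_trans (max_card _) (eq_leq (card_ord n)).
  apply: Rlt_fixed_bound (card_le _ _) (card_le _ _) (n1_gt0 _ Fg) (n2_gt0 _ Fg) _ => //.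
  case: (classic (g.1 = gone)) => [g1_eq1 | g1_neq1]; last by left; apply: fix1 (F1 _ Fg) _.
  right; apply: fix2 (F2 _ Fg) _ => g2_eq1; apply: g_neq1.
  by case: g {Fg} g1_eq1 g2_eq1 => a b /= -> ->.
Qed.

Section Ultrafilter.
Variable U : (nat -> Prop) -> Prop.
Hypothesis hU : free_ultrafilter U.

Lemma uf_mono (A B : nat -> Prop) : U A -> (forall i, A i -> B i) -> U B.
Proof. by case: hU => _ [_ [mono _]] UA AB; apply: mono UA. Qed.

Lemma ufI (A B : nat -> Prop) : U A -> U B -> U (fun i => A i /\ B i).
Proof. by case: hU => _ [_ [_ [inter _]]]; apply: inter. Qed.

Lemma uf_setT : U (fun _ => True).
Proof. by case: hU. Qed.

Lemma uf_const (P : Prop) : U (fun _ => P) -> P.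
Proof.
have [_ [U_set0 _]] := hU; move=> UP; apply: NNPP => notP; apply: U_set0.
by apply: (uf_mono UP) => _ /notP.
Qed.

End Ultrafilter.

Definition uf_prod (U1 U2 : (nat -> Prop) -> Prop) (A : nat -> Prop) : Prop :=
  U1 (fun i => U2 (fun j => A (to_nat (i, j)))).

Section ProductUltrafilter.
Variables U1 U2 : (nat -> Prop) -> Prop.
Hypotheses (uf1 : free_ultrafilter U1) (uf2 : free_ultrafilter U2).

Lemma free_ultrafilter_prod : free_ultrafilter (uf_prod U1 U2).
Proof.
have [_ [U1_set0 [_ [_ [U1_compl U1_cofin]]]]] := uf1.
have [_ [U2_set0 [_ [_ [U2_compl _]]]]] := uf2.
rewrite /free_ultrafilter /uf_prod; cbv beta.
split; [|split; [|split; [|split; [|split]]]].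
- by apply: (uf_mono uf1 (uf_setT uf1)) => i _; apply: uf_setT.
- move=> U_set0; apply: U1_set0; apply: (uf_mono uf1 U_set0) => i.
  exact: U2_set0.
- move=> A B AB UA; apply: (uf_mono uf1 UA) => i UAi.
  by apply: (uf_mono uf2 UAi) => j; apply: AB.
- move=> A B UA UB; apply: (uf_mono uf1 (ufI uf1 UA UB)) => i [].
  exact: ufI.
- move=> A; case: (U1_compl (fun i => U2 (fun j => A (to_nat (i, j))))) => [|U1_notA].
    by left.
  right; apply: (uf_mono uf1 U1_notA) => i notA.
  by case: (U2_compl (fun j => A (to_nat (i, j)))).
- move=> n; apply: (uf_mono uf1 (U1_cofin n)) => i le_ni.
  by apply: (uf_mono uf2 (uf_setT uf2)) => j _; have := to_nat_non_decreasing i j; lia.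
Qed.

Lemma uf_prod_rectangle (E1 E2 A : nat -> Prop) : U1 E1 -> U2 E2 ->
  (forall k, E1 (of_nat k).1 -> E2 (of_nat k).2 -> A k) -> uf_prod U1 U2 A.
Proof.
move=> U1E1 U2E2 E1E2A; apply: (uf_mono uf1 U1E1) => i E1i.
by apply: (uf_mono uf2 U2E2) => j E2j; apply: E1E2A; rewrite cancel_of_to.
Qed.

Lemma uf_prod_proj (E1 E2 A : nat -> Prop) : uf_prod U1 U2 A ->
  (forall k, A k -> E1 (of_nat k).1 /\ E2 (of_nat k).2) -> U1 E1 /\ U2 E2.
Proof.
move=> UA AE; have UE : U1 (fun i => U2 (fun j => E1 i /\ E2 j)).
  apply: (uf_mono uf1 UA) => i UAi; apply: (uf_mono uf2 UAi) => j /AE.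
  by rewrite cancel_of_to.
split.
- apply: (uf_mono uf1 UE) => i UEi; apply: (uf_const uf2).
  by apply: (uf_mono uf2 UEi) => j [].
- apply: (uf_const uf1); apply: (uf_mono uf1 UE) => i UEi.
  by apply: (uf_mono uf2 UEi) => j [].
Qed.

End ProductUltrafilter.

Section ProductEmbedding.
Variables (G1 G2 K1 K2 : Grp) (H1 : Subgroup G1) (H2 : Subgroup G2).
Variables (Gs1 Gs2 : nat -> Grp).
Variables (Hs1 : forall i, Subgroup (Gs1 i)) (Hs2 : forall j, Subgroup (Gs2 j)).
Variables (U1 U2 : (nat -> Prop) -> Prop).
Variables (pi1 : G1 -> forall i, prod_group (Gs1 i) K1).
Variables (pi2 : G2 -> forall j, prod_group (Gs2 j) K2).
Hypotheses (uf1 : free_ultrafilter U1) (uf2 : free_ultrafilter U2).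

Definition prod_Gs k := prod_group (Gs1 (of_nat k).1) (Gs2 (of_nat k).2).

Definition prod_Hs k : Subgroup (prod_Gs k) :=
  prod_subgroup (Hs1 (of_nat k).1) (Hs2 (of_nat k).2).

Definition prod_pi (g : prod_group G1 G2) k : prod_group (prod_Gs k) (prod_group K1 K2) :=
  (((pi1 g.1 (of_nat k).1).1, (pi2 g.2 (of_nat k).2).1),
   ((pi1 g.1 (of_nat k).1).2, (pi2 g.2 (of_nat k).2).2)).

Lemma prod_pi_morph :
  (forall g h, U1 (fun i => pi1 (gmul g h) i = gmul (pi1 g i) (pi1 h i))) ->
  (forall g h, U2 (fun j => pi2 (gmul g h) j = gmul (pi2 g j) (pi2 h j))) ->
  forall g h,
    uf_prod U1 U2 (fun k => prod_pi (gmul g h) k = gmul (prod_pi g k) (prod_pi h k)).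
Proof.
move=> morph1 morph2 g h.
apply: (uf_prod_rectangle uf1 uf2 (morph1 g.1 h.1) (morph2 g.2 h.2)) => k e1 e2.
by rewrite /prod_pi /= e1 e2.
Qed.

Lemma prod_pi_inj :
  (forall g, U1 (fun i => pi1 g i = gone) -> g = gone) ->
  (forall g, U2 (fun j => pi2 g j = gone) -> g = gone) ->
  forall g, uf_prod U1 U2 (fun k => prod_pi g k = gone) -> g = gone.
Proof.
move=> inj1 inj2 [g1 g2] Upi1.
have [U1g1 U2g2] : U1 (fun i => pi1 g1 i = gone) /\ U2 (fun j => pi2 g2 j = gone).
  apply: (uf_prod_proj uf1 uf2 Upi1) => k; rewrite /prod_pi /=.
  by case: (pi1 g1 _) => a1 b1; case: (pi2 g2 _) => a2 b2 /= [-> -> -> ->].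
by rewrite (inj1 _ U1g1) (inj2 _ U2g2).
Qed.

Lemma prod_pi_sub :
  (forall g, U1 (fun i => Hs1 i (pi1 g i).1) <-> H1 g) ->
  (forall g, U2 (fun j => Hs2 j (pi2 g j).1) <-> H2 g) ->
  forall g, uf_prod U1 U2 (fun k => prod_Hs k (prod_pi g k).1) <-> prod_subgroup H1 H2 g.
Proof.
move=> sub1 sub2 [g1 g2]; split=> [Upi | [/sub1 U1H1 /sub2 U2H2]].
- have [U1H1 U2H2] : U1 (fun i => Hs1 i (pi1 g1 i).1) /\ U2 (fun j => Hs2 j (pi2 g2 j).1).
    exact: (uf_prod_proj uf1 uf2 Upi).
  by split; [apply/sub1 | apply/sub2].
- by apply: (uf_prod_rectangle uf1 uf2 U1H1 U2H2) => k H1k H2k; split.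
Qed.

End ProductEmbedding.

Theorem proposition2p9 (G1 G2 K1 K2 : Grp) (H1 : Subgroup G1) (H2 : Subgroup G2) :
  rel_sofic H1 K1 -> rel_sofic H2 K2 ->
  rel_sofic (prod_subgroup H1 H2) (prod_group K1 K2).
Proof.
move=> [Gs1 [Hs1 [sofic1 [amen1 [U1 [pi1 [uf1 [morph1 [inj1 sub1]]]]]]]]].
move=> [Gs2 [Hs2 [sofic2 [amen2 [U2 [pi2 [uf2 [morph2 [inj2 sub2]]]]]]]]].
exists (prod_Gs Gs1 Gs2), (prod_Hs Hs1 Hs2); split; first by move=> k; apply: sofic_prod.
split; first by move=> k; apply: amenable_prod_subgroup.
exists (uf_prod U1 U2), (prod_pi pi1 pi2); split; first exact: free_ultrafilter_prod.
split; first exact: prod_pi_morph.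
split; first exact: prod_pi_inj.
exact: prod_pi_sub.
Qed.
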